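(* Let $(V,F^\bullet,h)$ be a complex polarized Hodge structure of length $w\ge1$ with Hodge decomposition $V=\bigoplus_pV^p$ and Hodge metric $h_H$. For every $u\in\mathrm{End}(V)^{-1}=\bigoplus_k\mathrm{Hom}(V^k,V^{k-1})$, with $u^*$ its $h_H$-adjoint, \[|[u,u^*]|^2_{h_H}\ge\frac{4}{w^2\cdot\dim V}\,|u|^4_{h_H},\] i.e. $\operatorname{tr}([u,u^*]^2)\ge\frac{4}{w^2\dim V}(\operatorname{tr}(uu^* ))^2$.
   Context: A complex polarized Hodge structure (weight zero) on $V$: nondegenerate hermitian form $h$ and $h$-orthogonal decomposition $V=\bigoplus_{p\in\mathbb{Z}}V^p$ with $h|_{V^p}$ positive definite for $p$ even and negative definite for $p$ odd. Its length is $b-a$ for the smallest interval $[a,b]$ with $V^p=0$ for $p\notin[a,b]$. The Hodge metric $h_H$ is the positive definite hermitian metric with the $V^p$ mutually orthogonal and $h_H=(-1)^ph$ on $V^p$; on $\mathrm{End}(V)$ the induced metric is $|u|^2_{h_H}=\operatorname{tr}(uu^* )$. *)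

From HB Require Import structures.
From mathcomp Require Import all_boot all_order all_algebra.
From mathcomp Require Import complex.
From mathcomp Require Import reals.
Set Implicit Arguments. Unset Strict Implicit. Unset Printing Implicit Defensive.
Import Order.TTheory GRing.Theory Num.Theory.
Local Open Scope ring_scope.

(* V = C^n realized as row vectors 'rV[C]_n; subspaces of V are row spaces of
   n x n matrices (mxalgebra); an endomorphism u of V is a matrix U acting on
   the right: x |-> x *m U. *)

Definition ctr (C : numClosedFieldType) m n (A : 'M[C]_(m, n)) : 'M[C]_(n, m) :=
  map_mx Num.conj A^T.

Definition sform (C : numClosedFieldType) n (H : 'M[C]_n) (x y : 'rV[C]_n) : C :=
  (x *m H *m ctr y) 0 0.

Definition hermitian (C : numClosedFieldType) n (H : 'M[C]_n) : Prop :=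
  ctr H = H.

(* A complex polarized Hodge structure of weight zero on V = C^n, with hermitian
   form given by H and Hodge decomposition V = (+)_p Vp p, of length exactly w:
   [a, a + w] is the smallest interval outside of which Vp vanishes. *)
Definition is_CPHS (C : numClosedFieldType) n (H : 'M[C]_n) (Vp : int -> 'M[C]_n)
    (w : nat) : Prop :=
  [/\ hermitian H, H \in unitmx,
    exists a : int,
      [/\ (forall p : int, (p < a)%R \/ (a + w%:Z < p)%R -> Vp p = 0),
          Vp a != 0, Vp (a + w%:Z) != 0,
          (\sum_(i < w.+1) Vp (a + i%:Z)%R :=: 1%:M)%MS &
          mxdirect (\sum_(i < w.+1) <<Vp (a + i%:Z)%R>>)%MS],
    (forall p q : int, p != q -> forall x y : 'rV[C]_n,
        (x <= Vp p)%MS -> (y <= Vp q)%MS -> sform H x y = 0) &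
    (forall p : int, forall x : 'rV[C]_n, (x <= Vp p)%MS -> x != 0 ->
        0 < (-1) ^ p * sform H x x)].

Definition is_hodge_metric (C : numClosedFieldType) n (H : 'M[C]_n)
    (Vp : int -> 'M[C]_n) (G : 'M[C]_n) : Prop :=
  [/\ hermitian G,
    (forall x : 'rV[C]_n, x != 0 -> 0 < sform G x x),
    (forall p q : int, p != q -> forall x y : 'rV[C]_n,
        (x <= Vp p)%MS -> (y <= Vp q)%MS -> sform G x y = 0) &
    (forall p : int, forall x y : 'rV[C]_n, (x <= Vp p)%MS -> (y <= Vp p)%MS ->
        sform G x y = (-1) ^ p * sform H x y)].

Definition is_adjoint (C : numClosedFieldType) n (G U Us : 'M[C]_n) : Prop :=
  forall x y : 'rV[C]_n, sform G (x *m U) y = sform G x (y *m Us).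

Definition in_End_minus1 (C : numClosedFieldType) n (Vp : int -> 'M[C]_n)
    (U : 'M[C]_n) : Prop :=
  forall k : int, (Vp k *m U <= Vp (k - 1))%MS.

From HB Require Import structures.
From mathcomp Require Import all_boot all_order all_algebra.
From mathcomp Require Import complex.
From mathcomp Require Import reals.
From mathcomp Require Import ring.
Set Implicit Arguments. Unset Strict Implicit. Unset Printing Implicit Defensive.
Import Order.TTheory GRing.Theory Num.Theory.
Local Open Scope ring_scope.

(* The Hodge metric G is positive definite hermitian, so G = S S^* with S
   invertible (spectral theorem).  Right multiplication by S carries the
   G-form to the standard hermitian form, the Hodge pieces V^a, ..., V^(a+w)
   to an orthogonal decomposition W_0 (+) ... (+) W_w, U to u = S^-1 U S and
   the G-adjoint of U to the conjugate transpose u^*; both traces in the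
   statement are invariant under this similarity.

   For the standard form we use the grading operator X, acting as 2i - w on
   W_i.  It is hermitian, tr(X^2) <= w^2 n since |2i - w| <= w, and [X, u] = 2u
   because u lowers the degree by one.  Hence K = [u, u^*] satisfies
   tr(K X) = 2 tr(u u^* ), and the Cauchy-Schwarz inequality for the trace form
   on hermitian matrices gives 4 tr(u u^* )^2 <= tr(K^2) tr(X^2) <= w^2 n tr(K^2). *)

Section ConjugateTranspose.
Variable C : numClosedFieldType.

Lemma ctrK m n (A : 'M[C]_(m, n)) : ctr (ctr A) = A.
Proof. by apply/matrixP=> i j; rewrite !mxE conjCK. Qed.

Lemma ctrM m n p (A : 'M[C]_(m, n)) (B : 'M[C]_(n, p)) :
  ctr (A *m B) = ctr B *m ctr A.
Proof. by rewrite /ctr trmx_mul map_mxM. Qed.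

Lemma ctrB m n (A B : 'M[C]_(m, n)) : ctr (A - B) = ctr A - ctr B.
Proof. by rewrite /ctr linearB map_mxB. Qed.

Lemma ctrZ m n a (A : 'M[C]_(m, n)) : ctr (a *: A) = a^* *: ctr A.
Proof. by rewrite /ctr linearZ map_mxZ. Qed.

Lemma ctr_sum n I (r : seq I) (F : I -> 'M[C]_n) :
  ctr (\sum_(i <- r) F i) = \sum_(i <- r) ctr (F i).
Proof. by rewrite /ctr raddf_sum map_mx_sum. Qed.

Lemma mxtrace_ctr n (A : 'M[C]_n) : \tr (ctr A) = (\tr A)^*.
Proof. by rewrite /mxtrace rmorph_sum; apply: eq_bigr => i _; rewrite !mxE. Qed.

Lemma mxtrace_mul_ctr_ge0 m n (A : 'M[C]_(m, n)) : 0 <= \tr (A *m ctr A).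
Proof.
apply: sumr_ge0 => i _; rewrite mxE; apply: sumr_ge0 => j _.
by rewrite !mxE mul_conjC_ge0.
Qed.

Lemma hermitian_sqr_trace_ge0 n (A : 'M[C]_n) : ctr A = A -> 0 <= \tr (A *m A).
Proof. by move=> hA; rewrite -{2}hA mxtrace_mul_ctr_ge0. Qed.

Lemma hermitian_mul_trace_real n (A B : 'M[C]_n) :
  ctr A = A -> ctr B = B -> \tr (A *m B) \is Num.real.
Proof.
move=> hA hB; rewrite CrealE -mxtrace_ctr ctrM hA hB.
by rewrite mxtrace_mulC.
Qed.

Lemma nonneg_quadratic_discr (a b c : C) :
  0 <= a -> 0 <= c -> b \is Num.real ->
  (forall t : C, t \is Num.real -> 0 <= a - t * b *+ 2 + t ^+ 2 * c) ->
  b ^+ 2 <= a * c.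
Proof.
move=> a0 c0 breal q.
have [cz|cn0] := eqVneq c 0.
  have [bz|bn0] := eqVneq b 0; first by rewrite bz cz expr0n mulr0.
  have treal : (a + 1) / (b *+ 2) \is Num.real.
    by rewrite rpredM ?rpredV ?rpredMn // rpredD ?rpred1 // ger0_real.
  have := q _ treal; rewrite cz mulr0 addr0 -mulrnAr divfK; last first.
    by rewrite mulrn_eq0 negb_or bn0.
  have -> : a - (a + 1) = -1 by ring.
  by rewrite oppr_ge0 ler10.
have cpos : 0 < c by rewrite lt_def cn0.
have := q (b / c) (rpredM breal (rpredVr (ger0_real c0))).
have -> : a - b / c * b *+ 2 + (b / c) ^+ 2 * c = a - b ^+ 2 / c by field.
by rewrite subr_ge0 ler_pdivrMr.
Qed.

Lemma hermitian_trace_cauchy_schwarz n (K X : 'M[C]_n) :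
  ctr K = K -> ctr X = X ->
  \tr (K *m X) ^+ 2 <= \tr (K *m K) * \tr (X *m X).
Proof.
move=> hK hX; apply: nonneg_quadratic_discr.
- exact: hermitian_sqr_trace_ge0.
- exact: hermitian_sqr_trace_ge0.
- exact: hermitian_mul_trace_real.
move=> t treal.
have hKtX : ctr (K - t *: X) = K - t *: X by rewrite ctrB ctrZ hK hX conj_Creal.
have := hermitian_sqr_trace_ge0 hKtX.
rewrite mulmxBl !mulmxBr -!scalemxAl -!scalemxAr !scalerA !raddfB /= !mxtraceZ.
by rewrite [\tr (X *m K)]mxtrace_mulC mulr2n -expr2; congr (0 <= _); ring.
Qed.

End ConjugateTranspose.

Section PositiveDefinite.
Variable C : numClosedFieldType.

Lemma sform_delta n (A : 'M[C]_n) i j :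
  sform A (delta_mx 0 i) (delta_mx 0 j) = A i j.
Proof.
rewrite /sform; have -> : ctr (delta_mx 0 j : 'rV[C]_n) = delta_mx j 0.
  by apply/matrixP=> a b; rewrite !mxE; case: eqP; case: eqP; rewrite ?conjC1 ?conjC0.
by rewrite -rowE -colE !mxE.
Qed.

Lemma sform_inj n (A B : 'M[C]_n) : (forall x y, sform A x y = sform B x y) -> A = B.
Proof. by move=> h; apply/matrixP=> i j; rewrite -!sform_delta h. Qed.

Lemma posdef_spectral_diag_gt0 n (G : 'M[C]_n) :
  G = ctr (spectralmx G) *m diag_mx (spectral_diag G) *m spectralmx G ->
  spectralmx G *m ctr (spectralmx G) = 1%:M ->
  (forall x, x != 0 -> 0 < sform G x x) -> forall i, 0 < spectral_diag G 0 i.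
Proof.
set P := spectralmx G; set d := spectral_diag G => Gdec PPt Gpos i.
have -> : d 0 i = sform G (row i P) (row i P).
  rewrite Gdec /sform rowE ctrM !mulmxA -(mulmxA _ P (ctr P)) PPt mulmx1.
  rewrite -(mulmxA _ P (ctr P)) PPt mulmx1 -/(sform _ _ _) sform_delta.
  by rewrite mxE eqxx mulr1n.
apply: Gpos; apply/eqP => Pi0.
have := congr1 (fun x => (x *m ctr P) 0 i) Pi0.
by rewrite rowE -mulmxA PPt mulmx1 mul0mx !mxE !eqxx /= => /eqP; rewrite oner_eq0.
Qed.

(* Every positive definite hermitian matrix factors as G = S S^* with S
   invertible: take S = P^* D^(1/2) from the spectral decomposition. *)
Lemma posdef_factor n (G : 'M[C]_n) :
  ctr G = G -> (forall x, x != 0 -> 0 < sform G x x) ->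
  exists2 S : 'M[C]_n, S \in unitmx & G = S *m ctr S.
Proof.
move=> hG Gpos.
have Gnormal : G \is normalmx by rewrite qualifE [map_mx _ _]hG.
have Pu := spectral_unitarymx G.
have PPt : spectralmx G *m ctr (spectralmx G) = 1%:M := unitarymxP Pu.
have Gdec := orthomx_spectralP Gnormal; rewrite (invmx_unitary Pu) in Gdec.
have dpos := posdef_spectral_diag_gt0 Gdec PPt Gpos.
set P := spectralmx G in Gdec PPt dpos Pu *; set d := spectral_diag G in Gdec dpos *.
pose s := \row_i sqrtC (d 0 i); pose si := \row_i (sqrtC (d 0 i))^-1.
have s_neq0 i : sqrtC (d 0 i) != 0 by rewrite sqrtC_eq0 gt_eqF.
exists (ctr P *m diag_mx s).
  have ss : diag_mx s *m diag_mx si = 1%:M.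
    by rewrite mulmx_diag -diag_const_mx; congr diag_mx; apply/rowP=> j; rewrite !mxE mulfV.
  have [] // := @mulmx1_unit _ _ (ctr P *m diag_mx s) (diag_mx si *m P).
  by rewrite -mulmxA (mulmxA (diag_mx s)) ss mul1mx (mulmx1C PPt).
have ctr_s : ctr (diag_mx s) = diag_mx s.
  apply/matrixP=> a b; rewrite !mxE eq_sym; case: eqP => [->|_] //=; last by rewrite conjC0.
  by rewrite !mulr1n conj_Creal // ger0_real // sqrtC_ge0 ltW.
rewrite ctrM ctrK ctr_s -mulmxA (mulmxA (diag_mx s)) mulmx_diag mulmxA Gdec.
by congr (_ *m diag_mx _ *m _); apply/rowP=> j; rewrite !mxE -expr2 sqrtCK.
Qed.

End PositiveDefinite.

Section OrthogonalProjection.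
Variable C : numClosedFieldType.

Definition projmx m n (W : 'M[C]_(m, n)) : 'M[C]_n :=
  ctr (schmidt (row_base W)) *m schmidt (row_base W).

Lemma projmxP m n (W : 'M[C]_(m, n)) : let P := projmx W in
  [/\ ctr P = P, forall x : 'rV_n, (x <= W)%MS -> x *m P = x,
      forall x : 'rV_n, (forall y : 'rV_n, (y <= W)%MS -> (x *m ctr y) 0 0 = 0) ->
        x *m P = 0
    & 0 <= \tr P].
Proof.
pose B := schmidt (row_base W).
have BBt : B *m ctr B = 1%:M.
  exact: (unitarymxP (schmidt_unitarymx _ (rank_leq_col W))).
have eqB : (B :=: W)%MS.
  exact: eqmx_trans (eqmx_schmidt_free (row_base_free W)) (eq_row_base W).
rewrite /projmx -/B; split.
- by rewrite ctrM ctrK.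
- by move=> x; rewrite -eqB => /submxP [D ->]; rewrite mulmxA -(mulmxA D) BBt mulmx1.
- move=> x xorth; rewrite mulmxA; suff -> : x *m ctr B = 0 by rewrite mul0mx.
  apply/rowP=> j; rewrite [RHS]mxE -(xorth (row j B)); last by rewrite -eqB row_sub.
  by rewrite !mxE; apply: eq_bigr => k _; rewrite !mxE.
- by rewrite (mxtrace_mulC (ctr B) B) BBt mxtrace1 ler0n.
Qed.

End OrthogonalProjection.

Section GradedDecomposition.
Variables (C : numClosedFieldType) (n w : nat) (W : nat -> 'M[C]_n).

Hypothesis W_orth : forall i j, i != j -> forall x y : 'rV[C]_n,
  (x <= W i)%MS -> (y <= W j)%MS -> (x *m ctr y) 0 0 = 0.
Hypothesis W_span : (\sum_(i < w.+1) W i :=: 1%:M)%MS.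

Local Notation P i := (projmx (W i)).

Lemma projmx_graded i j (x : 'rV_n) :
  (x <= W i)%MS -> x *m P j = if i == j then x else 0.
Proof.
move=> xW; have [_ Pid Pkill _] := projmxP (W j).
case: eqP => [ij|/eqP ij]; first by apply: Pid; rewrite -ij.
by apply: Pkill => y; apply: W_orth ij x y xW.
Qed.

Lemma graded_ext (A B : 'M[C]_n) :
  (forall i (x : 'rV_n), (i <= w)%N -> (x <= W i)%MS -> x *m A = x *m B) -> A = B.
Proof.
move=> hAB; apply/row_matrixP => k; rewrite -[A]mul1mx -[B]mul1mx !row_mul.
have : (row k 1%:M <= \sum_(i < w.+1) W i)%MS by rewrite W_span submx1.
case/sub_sumsmxP => D ->; rewrite !mulmx_suml; apply: eq_bigr => i _.
by apply: (hAB i); [rewrite -ltnS ltn_ord | rewrite submxMl].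
Qed.

Definition weighted (g : nat -> C) : 'M[C]_n := \sum_(i < w.+1) g i *: P i.

Lemma weighted_graded g i (x : 'rV_n) :
  (i <= w)%N -> (x <= W i)%MS -> x *m weighted g = g i *: x.
Proof.
move=> iw xW; rewrite mulmx_sumr (bigD1 (Ordinal (iw : (i < w.+1)%N))) //=.
rewrite -scalemxAr (projmx_graded _ xW) eqxx big1 ?addr0 // => j ji.
rewrite -scalemxAr (projmx_graded _ xW) ifN ?scaler0 //.
by apply: contra ji => /eqP ij; apply/eqP/val_inj.
Qed.

Lemma weighted_ctr g : (forall i, (g i)^* = g i) -> ctr (weighted g) = weighted g.
Proof.
move=> greal; rewrite ctr_sum; apply: eq_bigr => i _.
by rewrite ctrZ greal; have [-> _ _ _] := projmxP (W i).
Qed.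

Lemma weighted_trace_ge0 g : (forall i, 0 <= g i) -> 0 <= \tr (weighted g).
Proof.
move=> g0; rewrite /weighted raddf_sum /=; apply: sumr_ge0 => i _.
by rewrite mxtraceZ mulr_ge0 //; have [_ _ _ ->] := projmxP (W i).
Qed.

Definition grading : 'M[C]_n := weighted (fun i => 2%:R * i%:R - w%:R).

Lemma grading_graded i (x : 'rV_n) :
  (i <= w)%N -> (x <= W i)%MS -> x *m grading = (2%:R * i%:R - w%:R) *: x.
Proof. exact: weighted_graded. Qed.

Lemma grading_ctr : ctr grading = grading.
Proof. by apply: weighted_ctr => i; rewrite rmorphB rmorphM /= !conjC_nat. Qed.

Lemma grading_sqr_trace : \tr (grading *m grading) <= (w ^ 2 * n)%N%:R.
Proof.
pose c i : C := (4 * i * (w - i))%N%:R.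
have defc : (w ^ 2)%N%:R *: 1%:M - grading *m grading = weighted c.
  apply: graded_ext => i x iw xW; rewrite (weighted_graded _ iw xW) mulmxBr mulmxA.
  rewrite (grading_graded iw xW) -scalemxAl (grading_graded iw xW) -scalemxAr mulmx1.
  by rewrite scalerA -scalerBl /c !natrM natrB //; congr (_ *: _); ring.
have := congr1 mxtrace defc; rewrite raddfB /= mxtraceZ mxtrace1 -natrM => trc.
by rewrite -subr_ge0 trc weighted_trace_ge0 // => i; rewrite ler0n.
Qed.

Lemma grading_commutator (u : 'M[C]_n) :
  (forall x : 'rV_n, (x <= W 0)%MS -> x *m u = 0) ->
  (forall i (x : 'rV_n), (x <= W i.+1)%MS -> (x *m u <= W i)%MS) ->
  grading *m u - u *m grading = 2%:R *: u.
Proof.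
move=> u0 ulower; apply: graded_ext => i x iw xW.
rewrite mulmxBr !mulmxA (grading_graded iw xW) -scalemxAl -scalemxAr.
case: i iw xW => [|i] iw xW; first by rewrite u0 // mul0mx !scaler0 subr0.
rewrite (grading_graded (ltnW iw) (ulower _ _ xW)) -scalerBl; congr (_ *: _).
by rewrite mulrS; ring.
Qed.

Theorem lowering_commutator_bound (u : 'M[C]_n) :
  (forall x : 'rV_n, (x <= W 0)%MS -> x *m u = 0) ->
  (forall i (x : 'rV_n), (x <= W i.+1)%MS -> (x *m u <= W i)%MS) ->
  4%:R / (w ^ 2 * n)%N%:R * \tr (u *m ctr u) ^+ 2 <=
    \tr ((u *m ctr u - ctr u *m u) *m (u *m ctr u - ctr u *m u)).
Proof.
move=> u0 ulower; set K := u *m ctr u - ctr u *m u.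
have K_ctr : ctr K = K by rewrite /K ctrB !ctrM ctrK.
have KX : \tr (K *m grading) = 2%:R * \tr (u *m ctr u).
  rewrite /K mulmxBl raddfB /= -mulmxA mxtrace_mulC -!mulmxA -raddfB /=.
  by rewrite -mulmxBr grading_commutator // -scalemxAr mxtraceZ mxtrace_mulC.
have CS := hermitian_trace_cauchy_schwarz K_ctr grading_ctr.
rewrite KX exprMn -natrX in CS.
have K0 := hermitian_sqr_trace_ge0 K_ctr.
have [N0|Npos] := eqVneq ((w ^ 2 * n)%N%:R : C) 0; first by rewrite N0 invr0 mulr0 mul0r.
rewrite mulrAC ler_pdivrMr ?lt_def ?Npos ?ler0n //; apply: (le_trans CS).
by rewrite ler_wpM2l // grading_sqr_trace.
Qed.

End GradedDecomposition.

Section Similarity.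
Variables (C : numClosedFieldType) (n : nat) (S : 'M[C]_n).
Hypothesis S_unit : S \in unitmx.

Lemma similar_mulmx (A B : 'M[C]_n) :
  (invmx S *m A *m S) *m (invmx S *m B *m S) = invmx S *m (A *m B) *m S.
Proof. by rewrite !mulmxA mulmxK. Qed.

Lemma similar_subr (A B : 'M[C]_n) :
  invmx S *m A *m S - invmx S *m B *m S = invmx S *m (A - B) *m S.
Proof. by rewrite mulmxBr mulmxBl. Qed.

Lemma similar_trace (A : 'M[C]_n) : \tr (invmx S *m A *m S) = \tr A.
Proof. by rewrite mxtrace_mulC mulmxA mulmxV // mul1mx. Qed.

Lemma similar_sub m1 m2 (U : 'M[C]_n) (V : 'M[C]_(m1, n)) (V' : 'M[C]_(m2, n)) :
  (V *m U <= V')%MS -> forall x : 'rV_n,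
  (x <= V *m S)%MS -> (x *m (invmx S *m U *m S) <= V' *m S)%MS.
Proof.
move=> VU x /submxP [D ->]; rewrite !mulmxA mulmxK //.
by apply/submxMr/(submx_trans _ VU); rewrite -mulmxA submxMl.
Qed.

Lemma sform_factor (G : 'M[C]_n) (x y : 'rV_n) :
  G = S *m ctr S -> ((x *m S) *m ctr (y *m S)) 0 0 = sform G x y.
Proof. by move=> GS; rewrite /sform ctrM GS !mulmxA. Qed.

Lemma similar_adjoint (G U Us : 'M[C]_n) :
  G = S *m ctr S -> is_adjoint G U Us ->
  ctr (invmx S *m U *m S) = invmx S *m Us *m S.
Proof.
move=> GS adj.
have UG : U *m G = G *m ctr Us.
  by apply: sform_inj => x y; have := adj x y; rewrite /sform ctrM !mulmxA.
have hG : ctr G = G by rewrite GS ctrM ctrK.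
have ctrS : ctr S = invmx S *m G by rewrite GS mulmxA mulVmx ?mul1mx.
have GctrSi : G *m ctr (invmx S) = S.
  by rewrite GS -mulmxA -ctrM mulVmx // /ctr trmx1 map_mx1 mulmx1.
have GUt : G *m ctr U = Us *m G.
  by have := congr1 (@ctr _ _ _) UG; rewrite !ctrM ctrK hG.
by rewrite !ctrM ctrS -!mulmxA (mulmxA G) GUt -mulmxA GctrSi.
Qed.

End Similarity.

Theorem lemma3p7 (R : realType) (n w : nat) (H G : 'M[R[i]]_n)
    (Vp : int -> 'M[R[i]]_n) (U Us : 'M[R[i]]_n) :
  (1 <= w)%N ->
  is_CPHS H Vp w ->
  is_hodge_metric H Vp G ->
  in_End_minus1 Vp U ->
  is_adjoint G U Us ->
  let K := U *m Us - Us *m U in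
  (4%:R / ((w ^ 2 * n)%N)%:R) * (\tr (U *m Us)) ^+ 2 <= \tr (K *m K).
Proof.
move=> _ [_ _ [a [Vout _ _ Vsum _]] _ _] [hG Gpos Gorth _] Ulower adj /=.
have [S Su GS] := posdef_factor hG Gpos.
pose W i := Vp (a + i%:Z) *m S.
have W_orth i j : i != j -> forall x y : 'rV_n,
    (x <= W i)%MS -> (y <= W j)%MS -> (x *m ctr y) 0 0 = 0.
  move=> ij _ _ /submxP [x ->] /submxP [y ->]; rewrite !mulmxA (sform_factor _ _ GS).
  by apply: (Gorth (a + i%:Z) (a + j%:Z)); rewrite ?submxMl // (inj_eq (@addrI _ a)) eqz_nat.
have W_span : (\sum_(i < w.+1) W i :=: 1%:M)%MS.
  apply: eqmx_trans (eqmx_sym (sumsmxMr _ _ _)) _.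
  apply: eqmx_trans (eqmxMr S Vsum) _; rewrite mul1mx -{1}[S]mulmx1.
  by apply: eqmxMfull; rewrite row_full_unit.
pose u := invmx S *m U *m S.
have u0 (x : 'rV_n) : (x <= W 0)%MS -> x *m u = 0.
  have Va1 : Vp (a - 1) = 0 by apply: Vout; left; rewrite ltrBlDr ltrDl.
  move=> xW0; have := similar_sub Su (Ulower (a + 0%:Z)) xW0.
  by rewrite addr0 Va1 mul0mx submx0 => /eqP.
have ulower i (x : 'rV_n) : (x <= W i.+1)%MS -> (x *m u <= W i)%MS.
  have VU : (Vp (a + i.+1%:Z)%R *m U <= Vp (a + i%:Z)%R)%MS.
    by have := Ulower (a + i.+1%:Z); rewrite -addn1 PoszD addrA addrK.
  by move=> xW; have := similar_sub Su VU xW.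
have := lowering_commutator_bound W_orth W_span u0 ulower.
rewrite /u (similar_adjoint Su GS adj) !(similar_mulmx Su) !similar_subr.
by rewrite (similar_mulmx Su) !(similar_trace Su).
Qed.
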